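(* Let $\mathcal{N}$ be either the $(2n+1)$-dimensional Heisenberg algebra ($q=2$) or the $(4n+3)$-dimensional quaternionic Heisenberg algebra ($q=4$) over $\mathbb{R}$, with basis $e_1,\dots,e_{qn}$ of $\mathcal{V}$ and $Z_1,\dots,Z_{q-1}$ of $\mathcal{Z}$ as in the context. Let $f:\mathcal{N}\to\mathcal{N}$ be a Lie ring homomorphism with $f(\mathcal{V})\subseteq\mathcal{V}$, $f(Z_i)\neq0$ for $i=1,\dots,q-1$, and $f(e_1)=e_1$. Let $g=\pi\circ f\circ\iota:\mathcal{N}_2\to\mathcal{N}_2$. Then: (1) $g$ is a Lie ring homomorphism with $g(\mathcal{V}_2)\subseteq\mathcal{V}_2$, $g(Z_i)\neq0$ for all $i$, and $g|_{\mathcal{Z}}=f|_{\mathcal{Z}}$; (2) if $X\in\mathbb{R}\text{-span}\{e_1,e_{q+1},\dots,e_{qn}\}$, then $f_{e_i}(X)=0$ for each $i=2,\dots,q$; (3) for all $x\in\mathbb{R}$ and $i,j\in\{2,\dots,q\}$, $f_{e_i}(xe_j)=f_{Z_{i-1}}(xZ_{j-1})$.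
   Context: A Lie ring homomorphism is an additive bracket-preserving map. Heisenberg case: basis $X_1,Y_1,\dots,X_n,Y_n,Z_1$ with $[X_t,Y_t]=Z_1$ and other brackets zero; set $(e_1,\dots,e_{2n})=(X_1,Y_1,\dots,X_n,Y_n)$. Quaternionic case: basis $X_t,Y_t,V_t,W_t$ ($t=1..n$), $Z_1,Z_2,Z_3$ with nonzero brackets (and antisymmetric counterparts) $[X_t,Y_t]=Z_1$, $[X_t,V_t]=Z_2$, $[X_t,W_t]=Z_3$, $[Y_t,V_t]=Z_3$, $[Y_t,W_t]=-Z_2$, $[V_t,W_t]=Z_1$, brackets between different $t$ zero; set $(e_1,\dots,e_{4n})=(X_1,Y_1,V_1,W_1,\dots,X_n,Y_n,V_n,W_n)$. In both cases $\mathcal{V}=\mathbb{R}\text{-span}\{e_1,\dots,e_{qn}\}$, $\mathcal{Z}=\mathbb{R}\text{-span}\{Z_1,\dots,Z_{q-1}\}$ is central, $\mathcal{V}_1=\mathbb{R}\text{-span}\{e_1,\dots,e_q\}$, $\mathcal{V}_2=\mathbb{R}\text{-span}\{e_{q+1},\dots,e_{qn}\}$, $\mathcal{N}_2=\mathcal{V}_2\oplus\mathcal{Z}$ (a subalgebra), $\pi:\mathcal{N}\to\mathcal{N}_2$ is the projection $\pi(X+Y)=Y$ for $X\in\mathcal{V}_1$, $Y\in\mathcal{N}_2$, and $\iota:\mathcal{N}_2\to\mathcal{N}$ the inclusion. For $X\in\mathcal{N}$, write $f(X)=\sum_{i=1}^{qn}f_{e_i}(X)e_i+\sum_{i=1}^{q-1}f_{Z_i}(X)Z_i$.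 *)

From HB Require Import structures.
From mathcomp Require Import all_boot all_order all_algebra.
From mathcomp Require Import reals.
Set Implicit Arguments. Unset Strict Implicit. Unset Printing Implicit Defensive.
Import Order.TTheory GRing.Theory Num.Theory.
Local Open Scope ring_scope.

Inductive kind := Heis | QHeis.

Definition qd (k : kind) : nat := match k with Heis => 2%N | QHeis => 4%N end.

(* Structure constants of one block (0-based positions a b in 0..q-1,
   0-based centre index c in 0..q-2):  [e_a, e_b] = sum_c sc k a b c Z_c.
   Quaternionic (X,Y,V,W = 0,1,2,3): [X,Y]=Z1, [X,V]=Z2, [X,W]=Z3,
   [Y,V]=Z3, [Y,W]=-Z2, [V,W]=Z1, plus antisymmetric counterparts. *)
Definition sc {R : realType} (k : kind) (a b c : nat) : R :=
  match k with
  | Heis => match a, b, c with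
            | 0, 1, 0 => 1 | 1, 0, 0 => -1 | _, _, _ => 0 end
  | QHeis => match a, b, c with
             | 0, 1, 0 => 1 | 1, 0, 0 => -1
             | 0, 2, 1 => 1 | 2, 0, 1 => -1
             | 0, 3, 2 => 1 | 3, 0, 2 => -1
             | 1, 2, 2 => 1 | 2, 1, 2 => -1
             | 1, 3, 1 => -1 | 3, 1, 1 => 1
             | 2, 3, 0 => 1 | 3, 2, 0 => -1
             | _, _, _ => 0 end
  end.

(* The Lie algebra N = V (+) Z, with V = R^(qn) (coordinates on e_1..e_qn,
   stored 0-based) and Z = R^(q-1) (coordinates on Z_1..Z_(q-1)). *)
Definition NN (R : realType) (k : kind) (n : nat) : Type :=
  ('rV[R]_(qd k * n) * 'rV[R]_((qd k).-1))%type.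

(* Lie bracket: e_i, e_j (0-based) in the same block t (i %/ q = j %/ q)
   bracket according to sc; everything else (incl. Z) is central. *)
Definition lie {R : realType} {k : kind} {n : nat} (x y : NN R k n) : NN R k n :=
  (0, \row_(c < (qd k).-1)
        \sum_(i < qd k * n) \sum_(j < qd k * n)
          (if (i %/ qd k == j %/ qd k)%N
           then sc k (i %% qd k) (j %% qd k) c else 0) * x.1 0 i * y.1 0 j).

(* x e_i, 1-based index i (zero vector if i is out of range). *)
Definition eV {R : realType} (k : kind) (n : nat) (x : R) (i : nat) : NN R k n :=
  (\row_(l < qd k * n) (if (l.+1 == i)%N then x else 0), 0).

(* x Z_i, 1-based index i. *)
Definition eZ {R : realType} (k : kind) (n : nat) (x : R) (i : nat) : NN R k n :=
  (0, \row_(l < (qd k).-1) (if (l.+1 == i)%N then x else 0)).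

(* coordinate functions: v = sum_i fe v i e_i + sum_i fZ v i Z_i (1-based) *)
Definition fe {R : realType} {k : kind} {n : nat} (v : NN R k n) (i : nat) : R :=
  \sum_(l < qd k * n | (l.+1 == i)%N) v.1 0 l.
Definition fZ {R : realType} {k : kind} {n : nat} (v : NN R k n) (i : nat) : R :=
  \sum_(l < (qd k).-1 | (l.+1 == i)%N) v.2 0 l.

Definition lie_ring_hom {R : realType} {k : kind} {n : nat}
  (f : NN R k n -> NN R k n) : Prop :=
  (forall x y, f (x + y) = f x + f y) /\ (forall x y, f (lie x y) = lie (f x) (f y)).

Definition inV {R : realType} {k : kind} {n : nat} (x : NN R k n) : Prop := x.2 = 0.
Definition inZ {R : realType} {k : kind} {n : nat} (x : NN R k n) : Prop := x.1 = 0.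

(* N_2 = V_2 (+) Z, V_2 = span{e_(q+1),...,e_(qn)} *)
Definition inN2 {R : realType} {k : kind} {n : nat} (x : NN R k n) : Prop :=
  forall l : 'I_(qd k * n), (l < qd k)%N -> x.1 0 l = 0.

(* projection pi : N -> N_2 along V_1 (result viewed inside N) *)
Definition proj2 {R : realType} {k : kind} {n : nat} (x : NN R k n) : NN R k n :=
  (\row_(l < qd k * n) (if (l < qd k)%N then 0 else x.1 0 l), x.2).

Definition lie_ring_hom_N2 {R : realType} {k : kind} {n : nat}
  (g : NN R k n -> NN R k n) : Prop :=
  (forall x, inN2 x -> inN2 (g x)) /\
  (forall x y, inN2 x -> inN2 y -> g (x + y) = g x + g y) /\
  (forall x y, inN2 x -> inN2 y -> g (lie x y) = lie (g x) (g y)).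

From HB Require Import structures.
From mathcomp Require Import all_boot all_order all_algebra.
From mathcomp Require Import reals.
Set Implicit Arguments. Unset Strict Implicit. Unset Printing Implicit Defensive.
Import Order.TTheory GRing.Theory Num.Theory.
Local Open Scope ring_scope.

(* Everything rests on the bracket with e_1: [e_1, w] has Z_(i-1)-coordinate
   f_(e_i)(w) for 2 <= i <= q.  Hence the centralizer of e_1 consists of the
   vectors without e_2..e_q components, and every central element is a bracket
   [e_1, w].  Since f fixes e_1, f preserves that centralizer (part (2)), maps
   the centre into itself, and intertwines [e_1, _] (part (3)).  Finally e_1
   brackets trivially with everything in the centralizer of e_1 except
   e_2..e_q, so dropping the e_1-component does not change brackets of such
   elements, which makes g bracket preserving. *)

Section Bracket.

Variables (R : realType) (k : kind) (n : nat).
Hypothesis n_gt0 : (0 < n)%N.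

Local Notation NN := (NN R k n).
Local Notation q := (qd k).
Local Notation e1 := (eV k n 1 1).

Definition lie_coef (i j c : nat) : R :=
  if (i %/ q == j %/ q)%N then sc k (i %% q) (j %% q) c else 0.

Lemma lie2E (x y : NN) (c : 'I_q.-1) :
  (lie x y).2 0 c =
  \sum_(i < q * n) \sum_(j < q * n) lie_coef i j c * x.1 0 i * y.1 0 j.
Proof. by rewrite mxE. Qed.

Lemma q_ge2 : (2 <= q)%N. Proof. by case: k. Qed.

Lemma divq_neq i j : (i < q)%N -> (q <= j)%N -> (i %/ q == j %/ q)%N = false.
Proof.
move=> ltiq lejq; rewrite divn_small //; apply/negbTE.
by rewrite eq_sym -lt0n divn_gt0 // (leq_trans _ q_ge2).
Qed.

Lemma sc0j j c : (j < q)%N -> (c < q.-1)%N -> sc k 0 j c = (j == c.+1)%:R :> R.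
Proof. by case: k; case: j => [|[|[|[|j]]]]; case: c => [|[|[|c]]]. Qed.

Lemma lie_coef0l j c : (c < q.-1)%N -> lie_coef 0 j c = (j == c.+1)%:R.
Proof.
move=> ltcq; rewrite /lie_coef; case: (ltnP j q) => [ltjq | lejq].
  by rewrite !divn_small ?modn_small ?mod0n ?sc0j //; case: (q) ltjq.
rewrite divq_neq ?(ltn_trans _ q_ge2) //; case: (j =P c.+1) => // eqj.
by move: lejq; rewrite eqj leqNgt -ltn_predRL ltcq.
Qed.

Lemma succ_lt_qn (c : 'I_q.-1) : (c.+1 < q * n)%N.
Proof.
apply: leq_trans (leq_pmulr _ n_gt0); rewrite -ltn_predRL; exact: ltn_ord.
Qed.

Lemma feE (v : NN) (l : 'I_(q * n)) : fe v l.+1 = v.1 0 l.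
Proof. by rewrite /fe (big_pred1 l) // => l' /=; rewrite eqSS. Qed.

Lemma fZE (v : NN) (c : 'I_q.-1) : fZ v c.+1 = v.2 0 c.
Proof. by rewrite /fZ (big_pred1 c) // => c' /=; rewrite eqSS. Qed.

Lemma lie_e1 (a : R) (w : NN) (c : 'I_q.-1) :
  (lie (eV k n a 1) w).2 0 c = a * fe w c.+2.
Proof.
have qn_gt0 : (0 < q * n)%N by apply: leq_ltn_trans (succ_lt_qn c).
rewrite lie2E [LHS](bigD1 (Ordinal qn_gt0)) //= [X in _ + X]big1 ?addr0.
  rewrite /fe mulr_sumr [RHS]big_mkcond; apply: eq_bigr => j _ /=.
  rewrite !mxE lie_coef0l ?eqSS //=; case: eqP => _; first by rewrite mul1r mulrC.
  by rewrite !mul0r.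
move=> i ne_i0; rewrite big1 // => j _; rewrite mxE.
by case: i ne_i0 => [[|i] ?] //=; rewrite mulr0 mul0r.
Qed.

Lemma fZ_lie_e1 (a : R) (w : NN) i : (2 <= i <= q)%N ->
  fZ (lie (eV k n a 1) w) i.-1 = a * fe w i.
Proof.
case: i => [|[|c]] //= ltcq; rewrite -ltn_predRL in ltcq.
by rewrite (fZE _ (Ordinal ltcq)) lie_e1.
Qed.

Lemma lie_e1_eq0P (w : NN) :
  lie e1 w = 0 <-> forall i, (2 <= i <= q)%N -> fe w i = 0.
Proof.
split=> [w_cent i iq | w_cent].
  by rewrite -[fe w i]mul1r -fZ_lie_e1 // w_cent /fZ big1 // => l _; rewrite mxE.
congr pair; apply/matrixP => r c; rewrite ord1 lie_e1 w_cent ?mulr0 ?mxE //.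
by rewrite ltnS -ltn_predRL ltn_ord.
Qed.

Lemma inN2_lie_e1 (x : NN) : inN2 x -> lie e1 x = 0.
Proof.
move=> x_N2; apply/lie_e1_eq0P => i /andP[_ leiq].
by rewrite /fe big1 // => l /eqP eqi; apply: x_N2; rewrite -ltnS eqi.
Qed.

Lemma lie_e1_eV (x : R) j :
  (2 <= j <= q)%N -> lie e1 (eV k n x j) = eZ k n x j.-1.
Proof.
move=> jq; congr pair; apply/matrixP => r c.
rewrite ord1 lie_e1 mul1r (feE _ (Ordinal (succ_lt_qn c))) !mxE.
by case: j jq => [|[|j]].
Qed.

Lemma inZ_lie_e1 (z : NN) : inZ z -> exists w, z = lie e1 w.
Proof.
case: z => z1 z2; rewrite /inZ /= => ->.
exists (\row_(l < q * n) fZ ((0, z2) : NN) l, 0).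
congr pair; apply/matrixP => r c.
by rewrite ord1 lie_e1 mul1r (feE _ (Ordinal (succ_lt_qn c))) mxE fZE.
Qed.

Lemma proj2_inZ (z : NN) : inZ z -> proj2 z = z.
Proof.
case: z => z1 z2; rewrite /inZ /= => z1_0; congr pair; apply/matrixP => r l.
by rewrite z1_0 !mxE; case: ifP.
Qed.

Lemma proj2D (x y : NN) : proj2 (x + y) = proj2 x + proj2 y.
Proof.
congr pair; apply/matrixP => r l; rewrite !mxE.
by case: ifP; rewrite ?addr0.
Qed.

Lemma lie_proj2 (x y : NN) :
  lie e1 x = 0 -> lie e1 y = 0 -> lie x y = lie (proj2 x) (proj2 y).
Proof.
move=> /lie_e1_eq0P x_cent /lie_e1_eq0P y_cent.
have V1_0 (v : NN) (l : 'I_(q * n)) :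
    (forall i, (2 <= i <= q)%N -> fe v i = 0) -> (0 < l < q)%N -> v.1 0 l = 0.
  by move=> v_cent /andP[l_gt0 ltlq]; rewrite -feE v_cent // ltnS l_gt0.
congr pair; apply/matrixP => r c; rewrite ord1 !lie2E.
apply: eq_bigr => i _; apply: eq_bigr => j _; rewrite !mxE.
case: (ltnP i q) => [ltiq | leqi]; case: (ltnP j q) => [ltjq | leqj].
- rewrite !mulr0; case: (posnP i) => [i0 | i_gt0]; last first.
    by rewrite V1_0 ?i_gt0 // mulr0 mul0r.
  case: (posnP j) => [j0 | j_gt0]; last by rewrite (V1_0 y) ?j_gt0 // mulr0.
  by rewrite i0 j0 lie_coef0l // !mul0r.
- by rewrite /lie_coef divq_neq // !mul0r.
- by rewrite /lie_coef eq_sym divq_neq // !mul0r.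
- by [].
Qed.

End Bracket.

Section Homomorphism.

Variables (R : realType) (k : kind) (n : nat) (f : NN R k n -> NN R k n).
Local Notation e1 := (eV k n 1 1).
Hypotheses (n_gt0 : (0 < n)%N) (f_hom : lie_ring_hom f) (f_e1 : f e1 = e1).

Lemma lie_ring_hom0 : f 0 = 0.
Proof. by apply: (@addrI _ (f 0)); rewrite -f_hom.1 !addr0. Qed.

Lemma lie_ring_hom_cent_e1 x : lie e1 x = 0 -> lie e1 (f x) = 0.
Proof. by move=> x_cent; rewrite -f_e1 -f_hom.2 x_cent lie_ring_hom0. Qed.

Lemma lie_ring_hom_inZ z : inZ z -> inZ (f z).
Proof. by move=> /(inZ_lie_e1 n_gt0)[w ->]; rewrite f_hom.2. Qed.

Lemma lie_ring_hom_eV (x : R) i j : (2 <= i <= qd k)%N -> (2 <= j <= qd k)%N ->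
  fe (f (eV k n x j)) i = fZ (f (eZ k n x j.-1)) i.-1.
Proof.
by move=> iq jq; rewrite -lie_e1_eV // f_hom.2 f_e1 fZ_lie_e1 // mul1r.
Qed.

Lemma proj2_lie_ring_hom_N2 : lie_ring_hom_N2 (fun x => proj2 (f x)).
Proof.
split; [|split].
- by move=> x _ l ltlq; rewrite mxE ltlq.
- by move=> x y _ _; rewrite f_hom.1 proj2D.
- move=> x y /(inN2_lie_e1 n_gt0) x_cent /(inN2_lie_e1 n_gt0) y_cent.
  rewrite f_hom.2 proj2_inZ //.
  by apply: lie_proj2 => //; apply: lie_ring_hom_cent_e1.
Qed.

End Homomorphism.

Theorem lemma6p4 (R : realType) (k : kind) (n : nat) (f : NN R k n -> NN R k n) :
  (0 < n)%N ->
  lie_ring_hom f ->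
  (forall x, inV x -> inV (f x)) ->
  (forall i, (1 <= i < qd k)%N -> f (eZ k n 1 i) <> 0) ->
  f (eV k n 1 1) = eV k n 1 1 ->
  let g := fun x => proj2 (f x) in
  (* (1) *)
  (lie_ring_hom_N2 g /\
   (forall x, inN2 x -> inV x -> inV (g x)) /\
   (forall i, (1 <= i < qd k)%N -> g (eZ k n 1 i) <> 0) /\
   (forall z, inZ z -> g z = f z)) /\
  (* (2) *)
  (forall X : NN R k n, inV X -> (forall i, (2 <= i <= qd k)%N -> fe X i = 0) ->
     forall i, (2 <= i <= qd k)%N -> fe (f X) i = 0) /\
  (* (3) *)
  (forall (x : R) (i j : nat), (2 <= i <= qd k)%N -> (2 <= j <= qd k)%N ->
     fe (f (eV k n x j)) i = fZ (f (eZ k n x j.-1)) i.-1).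
Proof.
move=> n_gt0 f_hom f_V f_Z_neq0 f_e1 g.
have g_Z z : inZ z -> g z = f z.
  by move=> z_Z; rewrite /g proj2_inZ //; apply: lie_ring_hom_inZ.
split; [split; [|split; [|split]] | split].
- exact: proj2_lie_ring_hom_N2.
- by move=> x _ x_V; apply: f_V.
- by move=> i iq; rewrite g_Z //; apply: f_Z_neq0.
- exact: g_Z.
- move=> X _ /(lie_e1_eq0P n_gt0) X_cent.
  exact/(lie_e1_eq0P n_gt0)/lie_ring_hom_cent_e1.
- by move=> x i j; apply: lie_ring_hom_eV.
Qed.
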